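(* In the construction described in the context, assume Assumption 4.3 and Assumption 4.4 hold. Then for every extended state $(\xi,\vec\theta)\in\Xi\times\{-1,1\}^n$ and every $i\in\mathcal{A}(\xi)$ there exists $m\in\mathbb{N}$ with $$\mathcal{K}^m\big((\xi,\vec\theta),(\xi,R_i(\vec\theta))\big)>0.$$
   Context: Let $\Xi$ be a countable set, $\tilde\pi$ a probability measure on $\Xi$ and $\tilde Q$ a Markov kernel on $\Xi$. Assumption 4.3: (i) $\tilde\pi(\xi)>0$ for all $\xi$; (ii) $\tilde Q(\xi,\xi')\ne0$ iff $\tilde Q(\xi',\xi)\ne0$; (iii) the chain generated by $\tilde Q$ is irreducible. State graph $\mathcal{G}=(\mathcal{V},\mathcal{E})$, $\mathcal{V}=\Xi$, $\mathcal{E}=\{(\xi,\xi'):\tilde Q(\xi,\xi')>0\}$. For $i=1,\dots,n$, $\mathcal{G}_i^+=(\mathcal{V}_i,\mathcal{E}_i^+)$ are directed subgraphs of $\mathcal{G}$ without isolated vertices; $\mathcal{E}_i^-=\{(u,v):(v,u)\in\mathcal{E}_i^+\}$, $\mathcal{E}_i=\mathcal{E}_i^+\cup\mathcal{E}_i^-$, with $\mathcal{V}=\bigcup_i\mathcal{V}_i$, $\mathcal{E}=\bigcup_i\mathcal{E}_i$. $\mathcal{N}_i^{\pm}(\xi)=\{\xi':(\xi,\xi')\in\mathcal{E}_i^{\pm}\}$, and $\mathcal{N}_i^\theta$ is $\mathcal{N}_i^+$ for $\theta=+1$, $\mathcal{N}_i^-$ for $\theta=-1$. Extended space $\mathcal{X}=\Xi\times\{-1,1\}^n$;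 $\mathcal{X}_i=\mathcal{V}_i\times\{-1,1\}^n$; $R_i$ flips the sign of the $i$-th component of $\vec\theta$; $S_i(\xi,\vec\theta)=(\xi,R_i(\vec\theta))$. For $(\xi,\vec\theta)\in\mathcal{X}_i$: $Q_i((\xi,\vec\theta),(\xi',\vec\theta'))=\tilde Q(\xi,\xi')/\tilde Q(\xi,\mathcal{N}_i^{\theta_i}(\xi))$ if $\xi'\in\mathcal{N}_i^{\theta_i}(\xi)$, $\vec\theta'=\vec\theta$; $=1$ if $\mathcal{N}_i^{\theta_i}(\xi)=\emptyset$, $\xi'=\xi$, $\vec\theta'=R_i(\vec\theta)$; $=0$ otherwise. Weights $\tilde\omega_i(\xi)=\tilde Q(\xi,\mathcal{N}_i^+(\xi))+\tilde Q(\xi,\mathcal{N}_i^-(\xi))$ (assumed to sum to one over $i$); $\mathcal{A}(\xi)=\{i:\tilde\omega_i(\xi)>0\}$. For $x=(\xi,\vec\theta)\in\mathcal{X}_i$, $x'=(\xi',\vec\theta')$: $r_i(x,x')=\frac{\tilde\omega_i(\xi')\tilde\pi(\xi')Q_i((\xi',R_i\vec\theta'),(\xi,R_i\vec\theta))}{\tilde\omega_i(\xi)\tilde\pi(\xi)Q_i((\xi,\vec\theta),(\xi',\vec\theta'))}$, $P_i(x,x')=Q_i(x,x')\min(1,r_i(x,x'))+\mathbb{1}_{\{S_i(x)\}}(x')[1-\sum_{\tilde x}Q_i(x,\tilde x)\min(1,r_i(x,\tilde x))]$, and $\mathcal{K}((\xi,\vec\theta),\cdot)=\sum_i\tilde\omega_i(\xi)P_i((\xi,\vec\theta),\cdot)$.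 Assumption 4.4: for every $(\xi,\vec\theta)\in\mathcal{X}$ and $i\in\mathcal{A}(\xi)$ there exist $m\in\mathbb{N}$, $\xi'\in\Xi$ with $P_i^m((\xi,\vec\theta),(\xi',R_i(\vec\theta)))>0$. *)

From HB Require Import structures.
From mathcomp Require Import all_boot all_order all_algebra.
From mathcomp Require Import boolp classical_sets reals ereal esum.
Set Implicit Arguments. Unset Strict Implicit. Unset Printing Implicit Defensive.
Import Order.TTheory GRing.Theory Num.Theory.
Local Open Scope classical_set_scope.
Local Open Scope ring_scope.

(* sign vectors in {-1,1}^n : true encodes +1, false encodes -1 *)
Definition sgvec (n : nat) := {ffun 'I_n -> bool}.

Definition flip (n : nat) (i : 'I_n) (th : sgvec n) : sgvec n :=
  [ffun j => if j == i then ~~ th j else th j].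

Definition ext (Xi : countType) (n : nat) := (Xi * sgvec n)%type.

Definition Sflip (Xi : countType) (n : nat) (i : 'I_n) (x : ext Xi n) : ext Xi n :=
  (x.1, flip i x.2).

Definition kmass (R : realType) (T : choiceType) (Q : T -> T -> R) (x : T)
  (A : set T) : R := fine (\esum_(y in A) (Q x y)%:E).

Fixpoint kpow (R : realType) (T : choiceType) (k : T -> T -> R) (m : nat)
  (x y : T) {struct m} : \bar R :=
  match m with
  | 0 => ((x == y)%:R)%:E
  | m'.+1 => \esum_(z in [set: T]) (kpow k m' x z * (k z y)%:E)%E
  end.

(* neighbourhoods N_i^+, N_i^-, N_i^theta; Ep i is the edge set E_i^+ *)
Definition Nplus (Xi : countType) (n : nat) (Ep : 'I_n -> set (Xi * Xi))
  (i : 'I_n) (xi : Xi) : set Xi := [set y | Ep i (xi, y)].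
Definition Nminus (Xi : countType) (n : nat) (Ep : 'I_n -> set (Xi * Xi))
  (i : 'I_n) (xi : Xi) : set Xi := [set y | Ep i (y, xi)].
Definition Ntheta (Xi : countType) (n : nat) (Ep : 'I_n -> set (Xi * Xi))
  (i : 'I_n) (b : bool) (xi : Xi) : set Xi :=
  if b then Nplus Ep i xi else Nminus Ep i xi.

Definition omega (R : realType) (Xi : countType) (n : nat) (Q : Xi -> Xi -> R)
  (Ep : 'I_n -> set (Xi * Xi)) (i : 'I_n) (xi : Xi) : R :=
  kmass Q xi (Nplus Ep i xi) + kmass Q xi (Nminus Ep i xi).

(* Q_i on X_i (set to 0 outside X_i, where it is never used with positive weight) *)
Definition Qi (R : realType) (Xi : countType) (n : nat) (Q : Xi -> Xi -> R)
  (Ep : 'I_n -> set (Xi * Xi)) (V : 'I_n -> set Xi) (i : 'I_n)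
  (x x' : ext Xi n) : R :=
  let: (xi, th) := x in
  let: (xi', th') := x' in
  if `[< V i xi >] then
    let N := Ntheta Ep i (th i) xi in
    if `[< N xi' >] && (th' == th) then Q xi xi' / kmass Q xi N
    else if `[< N = set0 >] && (xi' == xi) && (th' == flip i th) then 1
    else 0
  else 0.

Definition ri (R : realType) (Xi : countType) (n : nat) (pi : Xi -> R)
  (Q : Xi -> Xi -> R) (Ep : 'I_n -> set (Xi * Xi)) (V : 'I_n -> set Xi)
  (i : 'I_n) (x x' : ext Xi n) : R :=
  (omega Q Ep i x'.1 * pi x'.1 * Qi Q Ep V i (Sflip i x') (Sflip i x)) /
  (omega Q Ep i x.1 * pi x.1 * Qi Q Ep V i x x').

Definition Pi (R : realType) (Xi : countType) (n : nat) (pi : Xi -> R)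
  (Q : Xi -> Xi -> R) (Ep : 'I_n -> set (Xi * Xi)) (V : 'I_n -> set Xi)
  (i : 'I_n) (x x' : ext Xi n) : R :=
  Qi Q Ep V i x x' * Num.min 1 (ri pi Q Ep V i x x') +
  (x' == Sflip i x)%:R *
  (1 - fine (\esum_(y in [set: ext Xi n])
               (Qi Q Ep V i x y * Num.min 1 (ri pi Q Ep V i x y))%:E)).

Definition Kmix (R : realType) (Xi : countType) (n : nat) (pi : Xi -> R)
  (Q : Xi -> Xi -> R) (Ep : 'I_n -> set (Xi * Xi)) (V : 'I_n -> set Xi)
  (x x' : ext Xi n) : R :=
  \sum_(i < n) omega Q Ep i x.1 * Pi pi Q Ep V i x x'.

From HB Require Import structures.
From mathcomp Require Import all_boot all_order all_algebra.
From mathcomp Require Import boolp classical_sets reals ereal esum.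
From mathcomp Require Import cardinality fsbigop.
From Stdlib Require Import Relation_Operators Operators_Properties.
Set Implicit Arguments. Unset Strict Implicit. Unset Printing Implicit Defensive.
Import Order.TTheory GRing.Theory Num.Theory.
Local Open Scope classical_set_scope.
Local Open Scope ring_scope.

(* Assumption 4.4 gives a P_i-path from (xi, th) to a state whose i-th sign is
   flipped.  Each step of such a path is either the flip S_i or an accepted
   move x -> y keeping the signs; in the latter case the acceptance ratio of
   the conjugate move S_i y -> S_i x is the reciprocal of that of x -> y, so
   that move is possible too.  As K plays P_i with the positive weight
   omega_i, induction on the path yields a K-path x -> y ~> S_i y -> S_i x. *)

Lemma esumZ_le (R : realType) (T : choiceType) (D : set T) (a : T -> \bar R)
    (c : R) : 0 <= c -> (forall t, (0 <= a t)%E) ->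
  (\esum_(t in D) (c%:E * a t) <= c%:E * \esum_(t in D) a t)%E.
Proof.
move=> c0 a0; apply: ge_ereal_sup => _ [X [finX XD] <-].
rewrite fsbig_finite //= -ge0_sume_distrr; last by move=> *; exact: a0.
apply: lee_wpmul2l; first by rewrite lee_fin.
rewrite -fsbig_finite //; apply: ereal_sup_ubound; by exists X.
Qed.

Lemma esum_setT_supp (R : realType) (T : choiceType) (A : set T)
    (a : T -> \bar R) :
  (forall t, (0 <= a t)%E) -> (forall t, ~ A t -> a t = 0%E) ->
  \esum_(t in [set: T]) a t = \esum_(t in A) a t.
Proof.
move=> a0 a_out; rewrite (esumID A) // setTI [X in (_ + X)%E]esum1 ?adde0 //.
by move=> t [_]; exact: a_out.
Qed.

Section KernelPower.
Variables (R : realType) (T : choiceType) (k : T -> T -> R).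
Hypothesis k_ge0 : forall x y, 0 <= k x y.

Local Notation step := (fun x y => 0 < k x y).

Lemma kpow_ge0 m x y : (0 <= kpow k m x y)%E.
Proof.
elim: m y => [|m IH] y /=; first by rewrite lee_fin ler0n.
by apply: esum_ge0 => z _; rewrite mule_ge0 // lee_fin.
Qed.

Lemma kpowS_ge m x z y : (kpow k m x z * (k z y)%:E <= kpow k m.+1 x y)%E.
Proof.
apply: esum_ge; exists [set z]; first by split; [exact: finite_set1|].
by rewrite fsbig_set1.
Qed.

Lemma kpow_gt0_rt m x y : (0 < kpow k m x y)%E -> clos_refl_trans T step x y.
Proof.
elim: m y => [|m IH] y /=.
  by case: eqP => [->|_]; [move=> _; apply: rt_refl|rewrite ltxx].
have [[z]|] := pselect (exists z, 0 < kpow k m x z * (k z y)%:E)%E; last first.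
  move=> no_pos; rewrite esum1 ?ltxx // => z _; apply/eqP.
  rewrite eq_le mule_ge0 ?kpow_ge0 ?lee_fin // andbT leNgt.
  by apply/negP => pos; apply: no_pos; exists z.
rewrite mule_ge0_gt0 ?kpow_ge0 ?lee_fin // lte_fin => /andP[/IH xz zy] _.
by apply: (rt_trans _ _ _ z) => //; exact: rt_step.
Qed.

Lemma rt_kpow_gt0 x y :
  clos_refl_trans T step x y -> exists m, (0 < kpow k m x y)%E.
Proof.
move=> xy; elim: (clos_rt_rtn1 _ _ _ _ xy) => [|z w zw _ [m xz]].
  by exists 0%N; rewrite /= eqxx lte_fin ltr01.
by exists m.+1; apply: lt_le_trans (kpowS_ge m x z w); rewrite mule_gt0.
Qed.

End KernelPower.

Lemma flipK (n : nat) (i : 'I_n) : involutive (flip i).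
Proof.
by move=> th; apply/ffunP => j; rewrite !ffunE; case: eqP; rewrite ?negbK.
Qed.

Lemma flip_id (n : nat) (i : 'I_n) (th : sgvec n) : flip i th i = ~~ th i.
Proof. by rewrite ffunE eqxx. Qed.

Lemma SflipK (Xi : countType) (n : nat) (i : 'I_n) : involutive (@Sflip Xi n i).
Proof. by move=> [xi th]; rewrite /Sflip /= flipK. Qed.

Section LiftedKernel.
Variables (R : realType) (Xi : countType) (n : nat) (pi : Xi -> R)
  (Q : Xi -> Xi -> R) (Ep : 'I_n -> set (Xi * Xi)) (V : 'I_n -> set Xi).
Hypotheses (pi_ge0 : forall xi, 0 <= pi xi) (Q_ge0 : forall xi xi', 0 <= Q xi xi')
  (Q_sum1 : forall xi, \esum_(xi' in [set: Xi]) (Q xi xi')%:E = 1%E).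

Local Notation w := (omega Q Ep).
Local Notation proposal := (Qi Q Ep V).
Local Notation r := (ri pi Q Ep V).
Local Notation P := (Pi pi Q Ep V).
Local Notation K := (Kmix pi Q Ep V).
Local Notation accepted i x y := (proposal i x y * Num.min 1 (r i x y)).

Lemma kmass_ge0 xi A : 0 <= kmass Q xi A.
Proof. by apply: fine_ge0; apply: esum_ge0 => y _; rewrite lee_fin. Qed.

Lemma kmassE xi A : \esum_(y in A) (Q xi y)%:E = (kmass Q xi A)%:E.
Proof.
have mass_ge0 : (0 <= \esum_(y in A) (Q xi y)%:E)%E.
  by apply: esum_ge0 => y _; rewrite lee_fin.
rewrite /kmass fineK // ge0_fin_numE // (@le_lt_trans _ _ 1%E) ?ltey //.
rewrite esum_mkcond -(Q_sum1 xi); apply: le_esum => y _.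
by case: ifP; rewrite ?lee_fin.
Qed.

Lemma omega_ge0 i xi : 0 <= w i xi.
Proof. by rewrite addr_ge0 ?kmass_ge0. Qed.

Lemma Qi_ge0 i x y : 0 <= proposal i x y.
Proof.
case: x y => [xi th] [xi' th']; rewrite /Qi.
by case: ifP => // _; case: ifP => [_|_]; [rewrite divr_ge0 ?kmass_ge0|case: ifP].
Qed.

Lemma ri_ge0 i x y : 0 <= r i x y.
Proof. by rewrite divr_ge0 ?mulr_ge0 ?omega_ge0 ?Qi_ge0. Qed.

Lemma accepted_ge0 i x y : 0 <= accepted i x y.
Proof. by rewrite mulr_ge0 ?Qi_ge0 // le_min ler01 ri_ge0. Qed.

Lemma Qi_outside i xi (th : sgvec n) y : ~ V i xi -> proposal i (xi, th) y = 0.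
Proof. by case: y => xi' th' NVxi; rewrite /Qi asboolF. Qed.

Lemma Qi_stuck i xi (th : sgvec n) y : V i xi -> Ntheta Ep i (th i) xi = set0 ->
  proposal i (xi, th) y = (y == (xi, flip i th))%:R.
Proof.
case: y => xi' th' Vxi N0; rewrite /Qi asboolT // N0 asboolF //= asboolT //.
by rewrite xpair_eqE; case: andP.
Qed.

Lemma Qi_move i xi (th : sgvec n) xi' th' :
  V i xi -> Ntheta Ep i (th i) xi != set0 ->
  proposal i (xi, th) (xi', th') =
  if `[< Ntheta Ep i (th i) xi xi' >] && (th' == th)
  then Q xi xi' / kmass Q xi (Ntheta Ep i (th i) xi) else 0.
Proof.
move=> Vxi /eqP N0; rewrite /Qi asboolT //.
by case: ifP => // _; rewrite asboolF.
Qed.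

Lemma esum_Qi_le1 i x : (\esum_(y in [set: ext Xi n]) (proposal i x y)%:E <= 1)%E.
Proof.
have proposal_ge0 y : (0 <= (proposal i x y)%:E)%E by rewrite lee_fin Qi_ge0.
case: x proposal_ge0 => xi th proposal_ge0.
have [Vxi|NVxi] := pselect (V i xi); last first.
  by rewrite esum1 // => y _; rewrite Qi_outside.
set N := Ntheta Ep i (th i) xi.
have [N0|N0] := eqVneq N set0.
  rewrite (@esum_setT_supp _ _ [set (xi, flip i th)]) // ?esum_set1 //.
    by rewrite Qi_stuck // eqxx.
  by move=> y /eqP y_ne; rewrite Qi_stuck // (negPf y_ne).
rewrite (@esum_setT_supp _ _ ((pair^~ th) @` setT)) //; last first.
  move=> [xi' th'] not_img; rewrite Qi_move // andbC; case: eqP => // th_eq.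
  by case: not_img; exists xi'; rewrite ?th_eq.
rewrite esum_image; last by move=> a b _ _ [].
under eq_esum do rewrite Qi_move // eqxx andbT mulrC -/N.
apply: (@le_trans _ _ (\esum_(z in setT)
    ((kmass Q xi N)^-1%:E * (if z \in N then Q xi z else 0)%:E))%E).
  apply: le_esum => z _; rewrite -EFinM lee_fin.
  have [Nz|Nz] := pselect (N z); first by rewrite asboolT // mem_set.
  by rewrite asboolF // memNset // mulr0.
apply: le_trans (esumZ_le _ _ _) _.
- by rewrite invr_ge0 kmass_ge0.
- by move=> z; rewrite lee_fin; case: ifP.
under eq_esum do rewrite (fun_if EFin).
rewrite -esum_mkcond kmassE -EFinM lee_fin.
have [->|k0] := eqVneq (kmass Q xi N) 0; first by rewrite invr0 mul0r ler01.
by rewrite mulVf.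
Qed.

Lemma rejection_ge0 i x :
  0 <= 1 - fine (\esum_(y in [set: ext Xi n]) (accepted i x y)%:E).
Proof.
set e := esum _ _.
have e_ge0 : (0 <= e)%E by apply: esum_ge0 => y _; rewrite lee_fin accepted_ge0.
have e_le1 : (e <= 1)%E.
  apply: le_trans (esum_Qi_le1 i x); apply: le_esum => y _.
  by rewrite lee_fin ler_piMr ?Qi_ge0 // ge_min lexx.
rewrite subr_ge0 -lee_fin fineK // ge0_fin_numE // (le_lt_trans e_le1) ?ltey //.
Qed.

Lemma accepted_le_Pi i x y : accepted i x y <= P i x y.
Proof. by rewrite /Pi lerDl mulr_ge0 ?rejection_ge0. Qed.

Lemma Pi_ge0 i x y : 0 <= P i x y.
Proof. exact: le_trans (accepted_ge0 i x y) (accepted_le_Pi i x y). Qed.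

Lemma omega_Pi_le_Kmix i x y : w i x.1 * P i x y <= K x y.
Proof.
rewrite /Kmix (bigD1 i) //= lerDl.
by apply: sumr_ge0 => j _; rewrite mulr_ge0 ?omega_ge0 ?Pi_ge0.
Qed.

Lemma Kmix_gt0 i x y : 0 < w i x.1 -> 0 < P i x y -> 0 < K x y.
Proof.
move=> w_gt0 P_gt0.
by apply: lt_le_trans (omega_Pi_le_Kmix i x y); rewrite mulr_gt0.
Qed.

Lemma Qi_neq0_cases i x y : proposal i x y != 0 -> y.2 = x.2 \/ y = Sflip i x.
Proof.
case: x y => [xi th] [xi' th']; rewrite /Qi /Sflip /=.
case: ifP => _; last by rewrite eqxx.
case: ifP => [/andP[_ /eqP ->]|_]; first by left.
by case: ifP => [/andP[/andP[_ /eqP ->] /eqP ->]|_]; [right|rewrite eqxx].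
Qed.

Lemma Pi_gt0_cases i x y : 0 < P i x y ->
  y = Sflip i x \/ y.2 = x.2 /\ 0 < accepted i x y.
Proof.
have [->|y_ne] := eqVneq y (Sflip i x); first by left.
rewrite /Pi (negPf y_ne) mul0r addr0 => acc_gt0; right; split => //.
have /Qi_neq0_cases [//|/eqP] : proposal i x y != 0.
  by apply: contraTneq acc_gt0 => ->; rewrite mul0r ltxx.
by rewrite (negPf y_ne).
Qed.

Lemma ri_Sflip i x y : r i (Sflip i y) (Sflip i x) = (r i x y)^-1.
Proof. by rewrite /ri !SflipK invf_div. Qed.

Lemma accepted_gt0 i x y :
  (0 < accepted i x y) = (0 < proposal i x y) && (0 < r i x y).
Proof.
by rewrite mulr_ge0_gt0 ?Qi_ge0 ?le_min ?ler01 ?ri_ge0 // lt_min ltr01.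
Qed.

Lemma accepted_reverse i x y : 0 < accepted i x y ->
  0 < w i y.1 /\ 0 < accepted i (Sflip i y) (Sflip i x).
Proof.
rewrite accepted_gt0 => /andP[_ r_gt0].
have num_gt0 : 0 < w i y.1 * pi y.1 * proposal i (Sflip i y) (Sflip i x).
  rewrite lt_neqAle !mulr_ge0 ?omega_ge0 ?Qi_ge0 // andbT eq_sym.
  by apply: contraTneq r_gt0; rewrite /ri => ->; rewrite mul0r ltxx.
rewrite !mulr_ge0_gt0 ?mulr_ge0 ?omega_ge0 ?Qi_ge0 // in num_gt0.
case/andP: num_gt0 => /andP[w_gt0 _] Q_gt0; split=> //.
by rewrite accepted_gt0 Q_gt0 ri_Sflip invr_gt0.
Qed.

Lemma Pi_path_Kmix_flip i x y :
  clos_refl_trans_1n _ (fun a b => 0 < P i a b) x y ->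
  0 < w i x.1 -> y.2 i != x.2 i ->
  clos_refl_trans _ (fun a b => 0 < K a b) x (Sflip i x).
Proof.
elim=> [a|a b c Pab _ IH] w_gt0; first by rewrite eqxx.
have Kab := Kmix_gt0 w_gt0 Pab.
case: (Pi_gt0_cases Pab) => [b_eq|[b2_eq acc_gt0]] c_flipped.
  by apply: rt_step; rewrite -b_eq.
have [wb_gt0 back_gt0] := accepted_reverse acc_gt0.
apply: (rt_trans _ _ _ b); first exact: rt_step.
apply: (rt_trans _ _ _ (Sflip i b)); first by apply: IH; rewrite ?b2_eq.
apply: rt_step; apply: (Kmix_gt0 (x := Sflip i b) wb_gt0).
exact: lt_le_trans back_gt0 (accepted_le_Pi _ _ _).
Qed.

End LiftedKernel.

Theorem lemmaB2 (R : realType) (Xi : countType) (n : nat)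
  (pi : Xi -> R) (Q : Xi -> Xi -> R)
  (Ep : 'I_n -> set (Xi * Xi)) (V : 'I_n -> set Xi)
  (* pi is a probability measure on Xi *)
  (pi_ge0 : forall xi, 0 <= pi xi)
  (pi_sum1 : \esum_(xi in [set: Xi]) (pi xi)%:E = 1%E)
  (* Q is a Markov kernel on Xi *)
  (Q_ge0 : forall xi xi', 0 <= Q xi xi')
  (Q_sum1 : forall xi, \esum_(xi' in [set: Xi]) (Q xi xi')%:E = 1%E)
  (* G_i^+ = (V_i, E_i^+) are directed subgraphs of G without isolated vertices *)
  (Ep_sub : forall i e, Ep i e -> 0 < Q e.1 e.2)
  (V_def : forall i xi, V i xi <-> exists xi', Ep i (xi, xi') \/ Ep i (xi', xi))
  (V_cover : forall xi, exists i, V i xi)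
  (E_cover : forall xi xi', 0 < Q xi xi' ->
     exists i, Ep i (xi, xi') \/ Ep i (xi', xi))
  (* the weights sum to one *)
  (omega_sum1 : forall xi, \sum_(i < n) omega Q Ep i xi = 1)
  (* Assumption 4.3 *)
  (A43_i : forall xi, 0 < pi xi)
  (A43_ii : forall xi xi', Q xi xi' != 0 <-> Q xi' xi != 0)
  (A43_iii : forall xi xi', exists m, (0 < kpow Q m xi xi')%E)
  (* Assumption 4.4 *)
  (A44 : forall (xi : Xi) (th : sgvec n) (i : 'I_n), 0 < omega Q Ep i xi ->
     exists m (xi' : Xi),
       (0 < kpow (Pi pi Q Ep V i) m (xi, th) (xi', flip i th))%E) :
  forall (xi : Xi) (th : sgvec n) (i : 'I_n), 0 < omega Q Ep i xi ->
    exists m, (0 < kpow (Kmix pi Q Ep V) m (xi, th) (xi, flip i th))%E.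
Proof.
move=> xi th i w_gt0.
have [m [xi' Pm_gt0]] := A44 xi th i w_gt0.
have P_path := kpow_gt0_rt (Pi_ge0 Ep V pi_ge0 Q_ge0 Q_sum1 i) Pm_gt0.
apply: rt_kpow_gt0.
apply: (Pi_path_Kmix_flip pi_ge0 Q_ge0 Q_sum1 (clos_rt_rt1n _ _ _ _ P_path)) => //=.
by rewrite flip_id; case: (th i).
Qed.
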